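(* Let $q$ be a power of an odd prime, $k\ge2$, $0<r_1<r_2<\cdots<r_k<n$ integers, $a_1,\dots,a_k\in\mathbb{F}_{q^n}^*$ with the multiplicative order of $a_i$ dividing $q^{r_1}-1$ for all $i=2,\dots,k$, and $S(x)=\sum_{i=1}^k a_ix^{q^{r_i}}$. Then the following are equivalent: (1) $S(x)$ is a scattered polynomial of index $r_1$ over $\mathbb{F}_{q^n}$; (2) $S_{r_1}(x)=S(x)-a_1x^{q^{r_1}}=\sum_{i=2}^k a_ix^{q^{r_i}}$ is a scattered polynomial of index $r_1$ over $\mathbb{F}_{q^n}$; (3) $S^{r_1}_{r_1}(x)=\sum_{i=2}^k a_ix^{q^{r_i-r_1}}$ is a scattered polynomial of index $0$ over $\mathbb{F}_{q^n}$.
   Context: An $\mathbb{F}_q$-linearized polynomial $S\in\mathbb{F}_{q^n}[x]$ is a scattered polynomial of index $t$ over $\mathbb{F}_{q^n}$ if for all $y,z\in\mathbb{F}_{q^n}^*$, $\frac{S(y)}{y^{q^t}}=\frac{S(z)}{z^{q^t}}$ implies $y/z\in\mathbb{F}_q$. *)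

From HB Require Import structures.
From mathcomp Require Import all_boot all_order all_algebra all_field.
Set Implicit Arguments. Unset Strict Implicit. Unset Printing Implicit Defensive.
Import GRing.Theory.
Local Open Scope ring_scope.

(* F plays the role of F_{q^n} (the statement assumes #|F| = q^n with q a
   power of the characteristic); then F_q is exactly the set of x with x^q = x. *)
Definition in_Fq (F : finFieldType) (q : nat) (x : F) : bool := x ^+ q == x.

Definition linpoly (F : finFieldType) (q : nat) (a : nat -> F) (e : nat -> nat)
  (lo hi : nat) (x : F) : F :=
  \sum_(lo <= i < hi) a i * x ^+ (q ^ e i).

Definition scattered (F : finFieldType) (q t : nat) (S : F -> F) : Prop :=
  forall y z : F, y != 0 -> z != 0 ->
    S y / y ^+ (q ^ t) = S z / z ^+ (q ^ t) -> in_Fq q (y / z).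

From HB Require Import structures.
From mathcomp Require Import all_boot all_order all_algebra all_field.
Set Implicit Arguments. Unset Strict Implicit. Unset Printing Implicit Defensive.
Import GRing.Theory.
Local Open Scope ring_scope.

(* Write t = r_1.  For y != 0, S(y)/y^{q^t} = a_1 + S_{r_1}(y)/y^{q^t}, and
   since every a_i (i >= 2) is fixed by x |-> x^{q^t}, additivity of this
   Frobenius power gives S_{r_1}(y)/y^{q^t} = (S^{r_1}_{r_1}(y)/y)^{q^t}.
   Both maps (translation by a_1, Frobenius power) are injective on F_{q^n},
   so the three quotient maps have the same fibres, and scatteredness only
   depends on those fibres. *)

Lemma scattered_ratio_inj (F : finFieldType) (q t s : nat) (S T h : F -> F) :
  injective h ->
  (forall y, y != 0 -> S y / y ^+ (q ^ t) = h (T y / y ^+ (q ^ s))) ->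
  scattered q t S <-> scattered q s T.
Proof.
move=> h_inj ST; split=> scat y z y0 z0 Eyz; apply: scat => //.
  by rewrite !ST // Eyz.
by apply: h_inj; rewrite -!ST.
Qed.

Lemma expr_card_pow_inj (F : finFieldType) (q n t : nat) :
  #|F| = (q ^ n)%N -> (t <= n)%N -> injective (fun x : F => x ^+ (q ^ t)).
Proof.
move=> cardF le_tn x y /= Exy.
have: (x ^+ (q ^ t)) ^+ (q ^ (n - t)) = (y ^+ (q ^ t)) ^+ (q ^ (n - t)).
  by rewrite Exy.
by rewrite -!exprM -expnD subnKC // -cardF !expf_card.
Qed.

Lemma expr_prim_root_dvd_pred (R : nzRingType) (d m : nat) (x : R) :
  d.-primitive_root x -> (d %| m - 1)%N -> (0 < m)%N -> x ^+ m = x.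
Proof.
move=> prim_x; rewrite subn1 => /dvdnP[c Em] m_gt0.
by rewrite -(prednK m_gt0) exprS Em mulnC exprM (prim_expr_order prim_x) expr1n mulr1.
Qed.

Lemma sumr_expr_pchar (F : finFieldType) (N lo hi : nat) (f : nat -> F) :
  [pchar F].-nat N ->
  (\sum_(lo <= i < hi) f i) ^+ N = \sum_(lo <= i < hi) f i ^+ N.
Proof.
move=> pcharN; apply: (big_rec2 (fun x y => x ^+ N = y)).
  by rewrite expr0n; case: N pcharN => [|N] //; rewrite /pnat ltnn.
by move=> i x y _ <-; rewrite exprDn_pchar.
Qed.

Lemma linpoly_expr_shift (F : finFieldType) (q t lo hi : nat)
    (a : nat -> F) (r : nat -> nat) (x : F) :
  [pchar F].-nat (q ^ t)%N ->
  (forall i, (lo <= i < hi)%N -> a i ^+ (q ^ t) = a i) ->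
  (forall i, (lo <= i < hi)%N -> (t <= r i)%N) ->
  linpoly q a r lo hi x = linpoly q a (fun i => (r i - t)%N) lo hi x ^+ (q ^ t).
Proof.
move=> pchar_qt a_fix le_tr; rewrite /linpoly sumr_expr_pchar //.
apply: eq_big_nat => i lt_i.
by rewrite exprMn a_fix // -exprM -expnD subnK ?le_tr.
Qed.

Lemma linpoly_ltn (F : finFieldType) (q lo hi : nat)
    (a : nat -> F) (r : nat -> nat) (y : F) :
  (lo < hi)%N -> y != 0 ->
  linpoly q a r lo hi y / y ^+ (q ^ r lo) =
    a lo + linpoly q a r lo.+1 hi y / y ^+ (q ^ r lo).
Proof.
move=> lt_lo_hi y0; rewrite /linpoly big_ltn // mulrDl -mulrA.
by rewrite mulfV ?mulr1 // expf_neq0.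
Qed.

Theorem mainTheorem5 (F : finFieldType) (p e q n k : nat)
    (a : nat -> F) (r : nat -> nat) :
  prime p -> odd p -> (0 < e)%N -> q = (p ^ e)%N ->
  #|F| = (q ^ n)%N ->
  (2 <= k)%N ->
  (0 < r 0%N)%N ->
  (forall i j : nat, (i < j)%N -> (j < k)%N -> (r i < r j)%N) ->
  (r k.-1 < n)%N ->
  (forall i : nat, (i < k)%N -> a i != 0) ->
  (forall i : nat, (1 <= i < k)%N ->
     exists2 d : nat, d.-primitive_root (a i) & (d %| q ^ r 0%N - 1)%N) ->
  [<-> scattered q (r 0%N) (linpoly q a r 0 k);
       scattered q (r 0%N) (linpoly q a r 1 k);
       scattered q 0 (linpoly q a (fun i => (r i - r 0%N)%N) 1 k)].
Proof.
move=> p_pr _ _ Eq cardF k_ge2 _ r_incr r_lt_n _ a_ord.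
set t := r 0%N.
have le_tn : (t <= n)%N.
  apply/ltnW/(leq_ltn_trans _ r_lt_n); case: (posnP k.-1) => [-> // | k1_gt0].
  by apply/ltnW/r_incr; rewrite // prednK // ltnW.
have pchar_qt : [pchar F].-nat (q ^ t)%N.
  have p_pchar : p \in [pchar F].
    by apply: (@card_finPcharP _ p (e * n)); rewrite // cardF Eq expnM.
  by rewrite Eq -expnM pnatX (pnatE _ p_pr) p_pchar.
have a_fix i : (1 <= i < k)%N -> a i ^+ (q ^ t) = a i.
  move=> lt_i; have [d prim_ai dvd_d] := a_ord i lt_i.
  by apply: expr_prim_root_dvd_pred prim_ai _ (andP pchar_qt).1.
have S_S1 : scattered q t (linpoly q a r 0 k) <-> scattered q t (linpoly q a r 1 k).
  apply: (scattered_ratio_inj (addrI (a 0%N))) => y.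
  exact: linpoly_ltn (ltnW k_ge2).
have S1_S2 : scattered q t (linpoly q a r 1 k) <->
             scattered q 0 (linpoly q a (fun i => (r i - t)%N) 1 k).
  apply: (scattered_ratio_inj (expr_card_pow_inj cardF le_tn)) => y y0.
  rewrite expn0 expr1 exprMn exprVn (linpoly_expr_shift y pchar_qt a_fix) //.
  by move=> i /andP[i_gt0 lt_ik]; apply/ltnW/r_incr.
by split; [|split]; [move/S_S1 | move/S1_S2 | move/S1_S2/S_S1].
Qed.
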